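(* Let $\{x_i\}_{i\in\mathcal{I}}$ and $\{y_i\}_{i\in\mathcal{I}}$ be two sequences of vectors in $\mathbb{R}^n$, $\mathcal{J}\subset\mathcal{I}$ a finite index subset, and $\lambda>0$. Let $A=\lambda I+\sum_{j\in\mathcal{J}}x_jx_j^\top$ and $B=\lambda I+\sum_{j\in\mathcal{J}}y_jy_j^\top$, and suppose $\mathrm{rank}(\{x_i\}_{i\in\mathcal{I}})=\mathrm{rank}(\{y_i\}_{i\in\mathcal{I}})=r$. Then for all $i\in\mathcal{I}$, $$\|x_i\|_{A^{-1}}\le\frac{1}{\sqrt\lambda}\|x_i-y_i\|_2+\left(1+\frac{2\sqrt r\sqrt{\sum_{j\in\mathcal{J}}\|x_j-y_j\|_2^2}}{\sqrt\lambda}\right)\|y_i\|_{B^{-1}}.$$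
   Context: For a positive definite matrix $M$, $\|x\|_M=\sqrt{x^\top Mx}$. *)

From HB Require Import structures.
From mathcomp Require Import all_boot all_order all_algebra.
Set Implicit Arguments. Unset Strict Implicit. Unset Printing Implicit Defensive.
Import Order.TTheory GRing.Theory Num.Theory.
Local Open Scope ring_scope.

Definition mnorm (R : rcfType) (n : nat) (M : 'M[R]_n) (v : 'cV[R]_n) : R :=
  Num.sqrt ((v^T *m M *m v) 0 0).

Definition norm2 (R : rcfType) (n : nat) (v : 'cV[R]_n) : R :=
  Num.sqrt ((v^T *m v) 0 0).

Definition fam_mx (R : rcfType) (n : nat) (I : Type) (x : I -> 'cV[R]_n)
  (s : seq I) : 'M[R]_(size s, n) :=
  \matrix_(k < size s, j < n) x (tnth (in_tuple s) k) j 0.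

(* rank of a (possibly infinite) family = dimension of its span
   = the maximal rank of a finite subfamily. *)
Definition fam_rank (R : rcfType) (n : nat) (I : Type) (x : I -> 'cV[R]_n)
  (r : nat) : Prop :=
  (exists s : seq I, \rank (fam_mx x s) = r) /\
  (forall s : seq I, (\rank (fam_mx x s) <= r)%N).

Definition gram (R : rcfType) (n : nat) (I : Type) (lam : R) (x : I -> 'cV[R]_n)
  (J : seq I) : 'M[R]_n :=
  lam%:M + \sum_(j <- J) x j *m (x j)^T.

From HB Require Import structures.
From mathcomp Require Import all_boot all_order all_algebra.
From mathcomp Require Import ring lra.
Import Order.TTheory GRing.Theory Num.Theory.
Set Implicit Arguments. Unset Strict Implicit. Unset Printing Implicit Defensive.
Local Open Scope ring_scope.

(* Put z := A^-1 x_i, so that ||x_i||_{A^-1}^2 = <x_i, z> = <x_i - y_i, z> + <y_i, z>.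
   The first term is at most ||x_i - y_i|| ||z||; by Cauchy-Schwarz for the form B,
   the second is at most ||y_i||_{B^-1} ||z||_B, and Minkowski's inequality bounds
   ||z||_B by ||z||_A + sqrt (sum_j ||x_j - y_j||^2) ||z||.  Since ||z||_A = ||x_i||_{A^-1}
   and sqrt lam ||z|| <= ||z||_A, this is a quadratic inequality in ||x_i||_{A^-1},
   which gives the bound with 2 sqrt r replaced by 1.  The rank hypotheses are only
   needed to see that 1 <= 2 sqrt r unless r = 0, in which case all vectors vanish. *)

Section RealInequalities.
Variable R : rcfType.

Lemma discr_le_of_quad_ge0 (a b c : R) : 0 <= a ->
  (forall t, 0 <= a * t ^+ 2 - 2 * b * t + c) -> b ^+ 2 <= a * c.
Proof.
move=> a_ge0 quad_ge0; have [a0|a_neq0] := eqVneq a 0.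
  have [->|b_neq0] := eqVneq b 0; first by rewrite a0 expr0n /= mul0r.
  have := quad_ge0 ((c + 1) / (2 * b)).
  have -> : a * ((c + 1) / (2 * b)) ^+ 2 - 2 * b * ((c + 1) / (2 * b)) + c = -1.
    by rewrite a0; field.
  lra.
have a_gt0 : 0 < a by rewrite lt_def a_neq0.
have := quad_ge0 (b / a).
have -> : a * (b / a) ^+ 2 - 2 * b * (b / a) + c = c - b ^+ 2 / a by field.
by rewrite subr_ge0 ler_pdivrMr // mulrC.
Qed.

Lemma le_sqrtM_of_sqr_le (a b c : R) : 0 <= a -> 0 <= c ->
  b ^+ 2 <= a * c -> b <= Num.sqrt a * Num.sqrt c.
Proof.
move=> a_ge0 c_ge0 b2_le; rewrite -sqrtrM //; apply: le_trans (ler_norm b) _.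
by rewrite -sqrtr_sqr ler_sqrt // mulr_ge0.
Qed.

Lemma le_of_sqr_le_affine (p s a b l : R) : 0 <= a -> 0 <= b -> 0 < l ->
  l * s <= p -> p ^+ 2 <= a * s + b * p -> p <= a / l + b.
Proof.
move=> a_ge0 b_ge0 l_gt0 ls_le p2_le.
have bound_ge0 : 0 <= a / l + b by rewrite addr_ge0 // divr_ge0 // ltW.
have [p_le0|p_gt0] := lerP p 0; first exact: le_trans p_le0 bound_ge0.
have as_le : a * s <= a / l * p.
  by rewrite -mulrA ler_wpM2l // mulrC ler_pdivlMr // mulrC.
rewrite -(ler_pM2r p_gt0); lra.
Qed.

Variable I : Type.
Implicit Types (J : seq I) (f g : I -> R).

Lemma sum_sqr_ge0 J f : 0 <= \sum_(j <- J) f j ^+ 2.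
Proof. by rewrite sumr_ge0 // => j _; rewrite sqr_ge0. Qed.

Lemma sum_mul_le_sqrt J f g :
  \sum_(j <- J) f j * g j <=
  Num.sqrt (\sum_(j <- J) f j ^+ 2) * Num.sqrt (\sum_(j <- J) g j ^+ 2).
Proof.
apply: le_sqrtM_of_sqr_le; rewrite ?sum_sqr_ge0 //.
apply: discr_le_of_quad_ge0 => [|t]; first exact: sum_sqr_ge0.
have := sum_sqr_ge0 J (fun j => t * f j - g j).
congr (_ <= _); rewrite mulr_suml -mulrA mulr_suml mulr_sumr -sumrB -big_split /=.
by apply: eq_bigr => j _; ring.
Qed.

Lemma sqrt_sum_sqrD_le (c : R) J f g : 0 <= c ->
  Num.sqrt (c + \sum_(j <- J) (f j + g j) ^+ 2) <=
  Num.sqrt (c + \sum_(j <- J) f j ^+ 2) + Num.sqrt (\sum_(j <- J) g j ^+ 2).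
Proof.
move=> c_ge0; set sf := Num.sqrt (c + \sum_(j <- J) f j ^+ 2).
set sg := Num.sqrt (\sum_(j <- J) g j ^+ 2).
have sf_ge0 : 0 <= sf := sqrtr_ge0 _; have sg_ge0 : 0 <= sg := sqrtr_ge0 _.
rewrite -[X in _ <= X]ger0_norm ?addr_ge0 // -sqrtr_sqr ler_sqrt ?sqr_ge0 //.
have sf2 : sf ^+ 2 = c + \sum_(j <- J) f j ^+ 2 by rewrite sqr_sqrtr ?addr_ge0 ?sum_sqr_ge0.
have sg2 : sg ^+ 2 = \sum_(j <- J) g j ^+ 2 by rewrite sqr_sqrtr ?sum_sqr_ge0.
have fg_le : \sum_(j <- J) f j * g j <= sf * sg.
  apply: le_trans (sum_mul_le_sqrt J f g) _; rewrite ler_wpM2r ?sqrtr_ge0 //.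
  by rewrite ler_sqrt ?lerDr ?addr_ge0 ?sum_sqr_ge0.
have -> : \sum_(j <- J) (f j + g j) ^+ 2 = \sum_(j <- J) f j ^+ 2 +
    2 * \sum_(j <- J) f j * g j + \sum_(j <- J) g j ^+ 2.
  by rewrite mulr_sumr -!big_split /=; apply: eq_bigr => j _; ring.
rewrite sqrrD; lra.
Qed.

End RealInequalities.

Section BilinearForm.
Variables (R : rcfType) (n : nat).
Implicit Types (M : 'M[R]_n) (u v w : 'cV[R]_n).

Definition bform M u v : R := (u^T *m M *m v) 0 0.

Lemma bformBl M u w v : bform M (u - w) v = bform M u v - bform M w v.
Proof. by rewrite /bform linearB /= !mulmxBl !mxE. Qed.

Lemma bformBr M u w v : bform M v (u - w) = bform M v u - bform M v w.
Proof. by rewrite /bform mulmxBr !mxE. Qed.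

Lemma bformZl M a u v : bform M (a *: u) v = a * bform M u v.
Proof. by rewrite /bform linearZ /= -!scalemxAl mxE. Qed.

Lemma bformZr M a u v : bform M v (a *: u) = a * bform M v u.
Proof. by rewrite /bform -scalemxAr mxE. Qed.

Lemma bform_sym M u v : M^T = M -> bform M u v = bform M v u.
Proof.
move=> M_sym; have entry_tr (A : 'M[R]_1) : A 0 0 = A^T 0 0 by rewrite mxE.
by rewrite /bform entry_tr !trmx_mul trmxK M_sym mulmxA.
Qed.

Section PositiveSemidefinite.
Variable M : 'M[R]_n.
Hypotheses (M_sym : M^T = M) (M_psd : forall w, 0 <= bform M w w).

Lemma bform_sqr_le u v : bform M u v ^+ 2 <= bform M u u * bform M v v.
Proof.
apply: discr_le_of_quad_ge0 => [|t]; first exact: M_psd.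
have := M_psd (t *: u - v); congr (_ <= _).
rewrite !(bformBl, bformBr, bformZl, bformZr) (bform_sym v u M_sym); ring.
Qed.

Lemma bform_le_sqrtM u v :
  bform M u v <= Num.sqrt (bform M u u) * Num.sqrt (bform M v v).
Proof. by apply: le_sqrtM_of_sqr_le; rewrite ?M_psd ?bform_sqr_le. Qed.

End PositiveSemidefinite.

Lemma bform1E u v : bform 1%:M u v = \sum_k u k 0 * v k 0.
Proof. by rewrite /bform mulmx1 mxE; apply: eq_bigr => k _; rewrite mxE. Qed.

Lemma bform1_ge0 v : 0 <= bform 1%:M v v.
Proof. by rewrite bform1E sumr_ge0 // => k _; rewrite -expr2 sqr_ge0. Qed.

Lemma bform1_eq0 v : bform 1%:M v v = 0 -> v = 0.
Proof.
rewrite bform1E => /eqP; rewrite psumr_eq0 => [/allP v0|k _]; last first.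
  by rewrite -expr2 sqr_ge0.
apply/matrixP => i j; rewrite (ord1 j) mxE.
by have := v0 i (mem_index_enum _); rewrite -expr2 sqrf_eq0 => /eqP.
Qed.

Lemma norm2E v : norm2 v = Num.sqrt (bform 1%:M v v).
Proof. by rewrite /norm2 /bform mulmx1. Qed.

Lemma mnorm_ge0 M v : 0 <= mnorm M v.
Proof. exact: sqrtr_ge0. Qed.

Lemma bform1_le u v : bform 1%:M u v <= norm2 u * norm2 v.
Proof. by rewrite !norm2E bform_le_sqrtM ?tr_scalar_mx //; exact: bform1_ge0. Qed.

Lemma bform1_sqr_le u v : bform 1%:M u v ^+ 2 <= norm2 u ^+ 2 * bform 1%:M v v.
Proof.
by rewrite norm2E sqr_sqrtr ?bform1_ge0 // bform_sqr_le ?tr_scalar_mx //; exact: bform1_ge0.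
Qed.

Lemma bform_invmx_sqr M v : M^T = M -> M \in unitmx ->
  bform M (invmx M *m v) (invmx M *m v) = bform (invmx M) v v.
Proof.
move=> M_sym M_unit; rewrite /bform trmx_mul trmx_inv M_sym !mulmxA.
by rewrite -(mulmxA _ (invmx M) M) mulVmx // mulmx1.
Qed.

Lemma bform1_invmxl M v w : M^T = M -> M \in unitmx ->
  bform 1%:M v w = bform M (invmx M *m v) w.
Proof.
move=> M_sym M_unit; rewrite /bform trmx_mul trmx_inv M_sym.
by rewrite -(mulmxA _ (invmx M) M) mulVmx // !mulmx1.
Qed.

End BilinearForm.

Section RegularizedGram.
Variables (R : rcfType) (n : nat) (I : Type) (lam : R).
Implicit Types (x y : I -> 'cV[R]_n) (J : seq I) (v z : 'cV[R]_n).

Lemma gram_sym x J : (gram lam x J)^T = gram lam x J.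
Proof.
rewrite /gram linearD /= tr_scalar_mx linear_sum /=; congr (_ + _).
by apply: eq_bigr => j _; rewrite trmx_mul trmxK.
Qed.

Lemma bform_gram x J v :
  bform (gram lam x J) v v = lam * bform 1%:M v v + \sum_(j <- J) bform 1%:M (x j) v ^+ 2.
Proof.
rewrite /bform /gram mulmxDr mulmxDl mxE mul_mx_scalar -scalemxAl mxE mulmx1.
congr (_ + _); rewrite mulmx_sumr mulmx_suml summxE; apply: eq_bigr => j _.
rewrite !mulmxA -(mulmxA (v^T *m x j)) [v^T *m x j]mx11_scalar.
rewrite [(x j)^T *m v]mx11_scalar -scalar_mxM mxE mulr1n expr2 mulmx1.
by congr (_ * _); rewrite -[v^T *m x j]trmxK trmx_mul trmxK mxE.
Qed.

Lemma bform_gram_ge x J v : lam * bform 1%:M v v <= bform (gram lam x J) v v.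
Proof. by rewrite bform_gram lerDl sum_sqr_ge0. Qed.

Lemma gram_unit x J : 0 < lam -> gram lam x J \in unitmx.
Proof.
move=> lam_gt0; rewrite -row_free_unit; apply: inj_row_free => v vA0.
have : lam * bform 1%:M v^T v^T <= 0.
  by apply: le_trans (bform_gram_ge x J v^T) _; rewrite /bform trmxK vA0 mul0mx mxE.
rewrite pmulr_rle0 // => v_le0.
have /bform1_eq0/(congr1 trmx) : bform 1%:M v^T v^T = 0.
  by apply/eqP; rewrite eq_le v_le0 bform1_ge0.
by rewrite trmxK linear0.
Qed.

Hypothesis lam_ge0 : 0 <= lam.

Lemma gram_psd x J v : 0 <= bform (gram lam x J) v v.
Proof. exact: le_trans (mulr_ge0 lam_ge0 (bform1_ge0 v)) (bform_gram_ge x J v). Qed.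

(* Minkowski's inequality for (sqrt lam z, (<x_j, z>)_j) and (0, (<y_j - x_j, z>)_j):
   their sum has norm ||z||_B, their norms are ||z||_A and at most
   sqrt (sum_j ||x_j - y_j||^2) ||z||. *)
Lemma sqrt_bform_gram_le x y J z :
  Num.sqrt (bform (gram lam y J) z z) <= Num.sqrt (bform (gram lam x J) z z) +
    Num.sqrt (\sum_(j <- J) norm2 (x j - y j) ^+ 2) * norm2 z.
Proof.
have yzE j : bform 1%:M (y j) z = bform 1%:M (x j) z + - bform 1%:M (x j - y j) z.
  by rewrite bformBl opprB addrCA subrr addr0.
rewrite !bform_gram; under eq_bigr => j _ do rewrite yzE.
apply: le_trans (sqrt_sum_sqrD_le _ _ _ (mulr_ge0 lam_ge0 (bform1_ge0 z))) _.
rewrite lerD2l norm2E -sqrtrM ?sum_sqr_ge0 // ler_sqrt ?mulr_ge0 ?sum_sqr_ge0 ?bform1_ge0 //.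
by rewrite mulr_suml ler_sum // => j _; rewrite sqrrN bform1_sqr_le.
Qed.

End RegularizedGram.

Lemma mnorm_invgram_le (R : rcfType) (n : nat) (I : Type) (x y : I -> 'cV[R]_n)
    (J : seq I) (lam : R) (i : I) : 0 < lam ->
  mnorm (invmx (gram lam x J)) (x i) <=
    (Num.sqrt lam)^-1 * norm2 (x i - y i) +
    (1 + Num.sqrt (\sum_(j <- J) norm2 (x j - y j) ^+ 2) / Num.sqrt lam) *
      mnorm (invmx (gram lam y J)) (y i).
Proof.
move=> lam_gt0; have lam_ge0 := ltW lam_gt0.
set A := gram lam x J; set B := gram lam y J.
set sS := Num.sqrt (\sum_(j <- J) _); set p := mnorm _ (x i); set q := mnorm _ (y i).
set z := invmx A *m x i.
have pE : p = Num.sqrt (bform A z z) by rewrite bform_invmx_sqr ?gram_sym ?gram_unit.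
have z_le : Num.sqrt lam * norm2 z <= p.
  by rewrite pE norm2E -sqrtrM // ler_sqrt ?gram_psd ?bform_gram_ge.
have p2E : p ^+ 2 = bform 1%:M (x i - y i) z + bform 1%:M (y i) z.
  rewrite pE sqr_sqrtr ?gram_psd // -bform1_invmxl ?gram_sym ?gram_unit //.
  by rewrite bformBl subrK.
have diff_le : bform 1%:M (x i - y i) z <= norm2 (x i - y i) * norm2 z.
  exact: bform1_le.
have yz_le : bform 1%:M (y i) z <= q * (p + sS * norm2 z).
  rewrite (bform1_invmxl _ _ (gram_sym lam y J) (gram_unit y J lam_gt0)).
  apply: le_trans (bform_le_sqrtM (gram_sym lam y J) (gram_psd lam_ge0 y J) _ _) _.
  rewrite bform_invmx_sqr ?gram_sym ?gram_unit // -/q ler_wpM2l ?sqrtr_ge0 //.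
  by rewrite pE sqrt_bform_gram_le.
have q_ge0 : 0 <= q := mnorm_ge0 _ _.
have sS_ge0 : 0 <= sS := sqrtr_ge0 _.
have : p <= (norm2 (x i - y i) + q * sS) / Num.sqrt lam + q.
  apply: (le_of_sqr_le_affine _ _ _ z_le).
  - by rewrite addr_ge0 ?mulr_ge0 ?sqrtr_ge0.
  - exact: q_ge0.
  - by rewrite sqrtr_gt0.
  - by rewrite p2E; lra.
by congr (_ <= _); field; rewrite gt_eqF ?sqrtr_gt0.
Qed.

Lemma fam_rank0_eq0 (R : rcfType) (n : nat) (I : Type) (x : I -> 'cV[R]_n) (j : I) :
  fam_rank x 0 -> x j = 0.
Proof.
case=> _ /(_ [:: j]); rewrite leqn0 mxrank_eq0 => /eqP x0.
apply/matrixP => k l; rewrite (ord1 l).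
by have := congr1 (fun M : 'M_(1, n) => M 0 k) x0; rewrite !mxE.
Qed.

Lemma sqrt_sum_le_rank_mul (R : rcfType) (n : nat) (I : Type) (x y : I -> 'cV[R]_n)
    (J : seq I) (r : nat) :
  fam_rank x r -> fam_rank y r ->
  Num.sqrt (\sum_(j <- J) norm2 (x j - y j) ^+ 2) <=
    2 * Num.sqrt r%:R * Num.sqrt (\sum_(j <- J) norm2 (x j - y j) ^+ 2).
Proof.
case: r => [|r] rk_x rk_y.
  rewrite big1 ?sqrtr0 ?mulr0 // => j _.
  rewrite (fam_rank0_eq0 j rk_x) (fam_rank0_eq0 j rk_y) subr0.
  by rewrite /norm2 mulmx0 mxE sqrtr0 expr0n.
have sqrt_r_ge1 : 1 <= Num.sqrt r.+1%:R :> R.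
  by rewrite -[X in X <= _]sqrtr1 ler_sqrt // ler1n.
by rewrite ler_peMl ?sqrtr_ge0 //; lra.
Qed.

Unset Implicit Arguments.
Theorem lemma13 (R : rcfType) (n : nat) (I : eqType) (x y : I -> 'cV[R]_n)
  (J : seq I) (lam : R) (r : nat) :
  uniq J -> 0 < lam ->
  fam_rank x r -> fam_rank y r ->
  forall i : I,
    mnorm (invmx (gram lam x J)) (x i) <=
      (Num.sqrt lam)^-1 * norm2 (x i - y i) +
      (1 + 2 * Num.sqrt r%:R * Num.sqrt (\sum_(j <- J) norm2 (x j - y j) ^+ 2)
             / Num.sqrt lam) * mnorm (invmx (gram lam y J)) (y i).
Proof.
move=> _ lam_gt0 rk_x rk_y i.
apply: le_trans (mnorm_invgram_le x y J i lam_gt0) _.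
rewrite lerD2l ler_wpM2r ?mnorm_ge0 // lerD2l ler_pM2r ?invr_gt0 ?sqrtr_gt0 //.
exact: sqrt_sum_le_rank_mul.
Qed.
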